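(* Let $p$ be a prime and $n$ a positive integer. Let $H_n(\mathbf{Q}_p)=\mathbf{Q}_p^n\times\mathbf{Q}_p^n\times\mathbf{Q}_p$ with the group operation $$(x,y,t)\diamond(x',y',t')=\Big(x+x',\,y+y',\,t+t'+\sum_{j=1}^n x_j y_j'\Big),$$ and for $r\in\mathbf{Q}_p$ let $\delta_r((x,y,t))=(rx,ry,r^2t)$. Define $$N((x,y,t))=\max(|x_1|_p,\ldots,|x_n|_p,|y_1|_p,\ldots,|y_n|_p,|t|_p^{1/2}).$$ Then for all $(x,y,t),(x',y',t')\in H_n(\mathbf{Q}_p)$ and $r\in\mathbf{Q}_p$: (i) $N((x,y,t)\diamond(x',y',t'))\le\max(N((x,y,t)),N((x',y',t')))$; (ii) $N((x,y,t)^{-1})=N((x,y,t))$, where $(x,y,t)^{-1}$ is the inverse in $H_n(\mathbf{Q}_p)$; (iii) $N(\delta_r((x,y,t)))=|r|_p\,N((x,y,t))$. Consequently $N((x',y',t')^{-1}\diamond(x,y,t))$ is a left-invariant ultrametric and $N((x,y,t)\diamond(x',y',t')^{-1})$ is a right-invariant ultrametric on $H_n(\mathbf{Q}_p)$, each determining the product topology coming from the standard topology on $\mathbf{Q}_p$.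
   Context: $|\cdot|_p$ denotes the $p$-adic absolute value on the field $\mathbf{Q}_p$ of $p$-adic numbers. The inverse in this group is $(x,y,t)^{-1}=(-x,-y,-t+\sum_j x_jy_j)$. A metric $d$ is an ultrametric if $d(x,z)\le\max(d(x,y),d(y,z))$; it is left-invariant if $d(ax,ay)=d(x,y)$ for all $a,x,y$, and right-invariant if $d(xb,yb)=d(x,y)$. *)

From HB Require Import structures.
From mathcomp Require Import all_boot all_order all_algebra.
From mathcomp Require Import reals.
Set Implicit Arguments. Unset Strict Implicit. Unset Printing Implicit Defensive.
Import Order.TTheory GRing.Theory Num.Theory.
Local Open Scope ring_scope.

(* The p-adic absolute value on rationals: |q|_p = p^(-v_p(q)), |0|_p = 0. *)
Definition padic_abs_rat (R : realType) (p : nat) (q : rat) : R :=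
  if q == 0 then 0
  else (p%:R ^+ logn p (absz (denq q))) / (p%:R ^+ logn p (absz (numq q))).

(* Q_p is (up to isometric isomorphism) the field K with an absolute value
   abs : K -> R which is an ultrametric absolute value extending |.|_p on Q
   (via the canonical embedding ratr), in which Q is dense, and which is
   complete.  This is the completion of (Q, |.|_p). *)
Definition is_Qp (R : realType) (p : nat) (K : fieldType) (abs : K -> R) : Prop :=
  (forall x : K, 0 <= abs x) /\
  (forall x : K, abs x = 0 <-> x = 0) /\
  (forall x y : K, abs (x * y) = abs x * abs y) /\
  (forall x y : K, abs (x + y) <= Num.max (abs x) (abs y)) /\
  (forall q : rat, abs (ratr q) = padic_abs_rat R p q) /\
  (forall (x : K) (e : R), 0 < e -> exists q : rat, abs (x - ratr q) < e) /\
  (forall u : nat -> K,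
         (forall e : R, 0 < e -> exists N : nat, forall m k : nat,
              (N <= m)%N -> (N <= k)%N -> abs (u m - u k) < e) ->
         exists l : K, forall e : R, 0 < e -> exists N : nat, forall m : nat,
              (N <= m)%N -> abs (u m - l) < e).

Definition heis (K : fieldType) (n : nat) := ('rV[K]_n * 'rV[K]_n * K)%type.

Definition hmul (K : fieldType) (n : nat) (g h : heis K n) : heis K n :=
  let: (x, y, t) := g in let: (x', y', t') := h in
  (x + x', y + y', t + t' + \sum_(j < n) x 0 j * y' 0 j).

Definition hinv (K : fieldType) (n : nat) (g : heis K n) : heis K n :=
  let: (x, y, t) := g in (- x, - y, - t + \sum_(j < n) x 0 j * y 0 j).

Definition hdil (K : fieldType) (n : nat) (r : K) (g : heis K n) : heis K n :=
  let: (x, y, t) := g in (r *: x, r *: y, r ^+ 2 * t).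

Definition hnorm (R : realType) (K : fieldType) (abs : K -> R) (n : nat)
    (g : heis K n) : R :=
  let: (x, y, t) := g in
  Num.max (\big[Num.max/0]_(j < n) Num.max (abs (x 0 j)) (abs (y 0 j)))
          (Num.sqrt (abs t)).

Definition is_ultrametric (R : realType) (T : Type) (d : T -> T -> R) : Prop :=
  [/\ (forall x y, 0 <= d x y),
      (forall x y, d x y = 0 <-> x = y),
      (forall x y, d x y = d y x),
      (forall x y z, d x z <= d x y + d y z)
    & (forall x y z, d x z <= Num.max (d x y) (d y z))].

Definition left_invariant (K : fieldType) (n : nat) (R : realType)
    (d : heis K n -> heis K n -> R) : Prop :=
  forall a g h, d (hmul a g) (hmul a h) = d g h.

Definition right_invariant (K : fieldType) (n : nat) (R : realType)
    (d : heis K n -> heis K n -> R) : Prop :=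
  forall b g h, d (hmul g b) (hmul h b) = d g h.

Definition metric_open (R : realType) (T : Type) (d : T -> T -> R)
    (U : T -> Prop) : Prop :=
  forall g, U g -> exists e : R, 0 < e /\ forall h, d g h < e -> U h.

Definition abs_open (R : realType) (K : fieldType) (abs : K -> R)
    (V : K -> Prop) : Prop :=
  forall x, V x -> exists e : R, 0 < e /\ forall y, abs (y - x) < e -> V y.

Definition product_open (R : realType) (K : fieldType) (abs : K -> R) (n : nat)
    (U : heis K n -> Prop) : Prop :=
  forall g : heis K n, U g ->
    exists (Vx Vy : 'I_n -> K -> Prop) (Vt : K -> Prop),
      [/\ (forall j, abs_open abs (Vx j)), (forall j, abs_open abs (Vy j)),
          abs_open abs Vt,
          (forall j, Vx j (g.1.1 0 j) /\ Vy j (g.1.2 0 j)) /\ Vt g.2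
        & forall h : heis K n,
            (forall j, Vx j (h.1.1 0 j) /\ Vy j (h.1.2 0 j)) -> Vt h.2 -> U h].

Definition induces_product_topology (R : realType) (K : fieldType) (abs : K -> R)
    (n : nat) (d : heis K n -> heis K n -> R) : Prop :=
  forall U : heis K n -> Prop, metric_open d U <-> product_open abs U.

(* Because |.|_p is ultrametric, each coordinate of g h is bounded by the
   corresponding power of max (N g) (N h): the twist sum_j x_j y'_j is a sum of
   terms of size at most max (N g) (N h) ^ 2.  With N (g^-1) = N g this makes N an
   ultrametric group norm, so h^-1 g and g h^-1 yield invariant ultrametrics.  Their
   balls around g are nested with coordinate boxes around g, since the coordinates
   of h^-1 g are those of g - h except for a twist sum_j x'_j (y'_j - y_j) in the
   last one, which is small when h is near g (and likewise for g h^-1).  Only the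
   ultrametric absolute-value axioms of Q_p are used. *)

From HB Require Import structures.
From mathcomp Require Import all_boot all_order all_algebra.
From mathcomp Require Import reals ring.
Import Order.TTheory GRing.Theory Num.Theory.
Set Implicit Arguments.
Unset Strict Implicit.
Unset Printing Implicit Defensive.
Local Open Scope ring_scope.

Section HeisenbergGroup.
Context {K : fieldType} {n : nat}.
Implicit Types (x y : 'rV[K]_n) (g h : heis K n).

Local Notation dot x y := (\sum_(j < n) x 0 j * y 0 j).

Lemma dotDl x x' y : dot (x + x') y = dot x y + dot x' y.
Proof. by rewrite -big_split; apply: eq_bigr => j _; rewrite mxE mulrDl. Qed.

Lemma dotDr x y y' : dot x (y + y') = dot x y + dot x y'.
Proof. by rewrite -big_split; apply: eq_bigr => j _; rewrite mxE mulrDr. Qed.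

Lemma dotNl x y : dot (- x) y = - dot x y.
Proof. by rewrite -sumrN; apply: eq_bigr => j _; rewrite mxE mulNr. Qed.

Lemma dotNr x y : dot x (- y) = - dot x y.
Proof. by rewrite -sumrN; apply: eq_bigr => j _; rewrite mxE mulrN. Qed.

Lemma dot0l y : dot (0 : 'rV_n) y = 0.
Proof. by rewrite big1 // => j _; rewrite mxE mul0r. Qed.

Lemma dot0r x : dot x (0 : 'rV_n) = 0.
Proof. by rewrite big1 // => j _; rewrite mxE mulr0. Qed.

Lemma dotC x y : dot x y = dot y x.
Proof. by apply: eq_bigr => j _; rewrite mulrC. Qed.

Definition hone : heis K n := (0, 0, 0).

Lemma hmulA : associative (@hmul K n).
Proof.
move=> [[x y] t] [[x' y'] t'] [[x'' y''] t''] /=.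
by rewrite dotDl dotDr !addrA; congr (_, _, _); ring.
Qed.

Lemma hmul1g : left_id hone (@hmul K n).
Proof. by move=> [[x y] t] /=; rewrite dot0l !add0r addr0. Qed.

Lemma hmulg1 : right_id hone (@hmul K n).
Proof. by move=> [[x y] t] /=; rewrite dot0r !addr0. Qed.

Lemma hmulVg : left_inverse hone (@hinv K n) (@hmul K n).
Proof. by move=> [[x y] t] /=; rewrite dotNl !addNr /hone; congr (_, _, _); ring. Qed.

Lemma hmulgV : right_inverse hone (@hinv K n) (@hmul K n).
Proof. by move=> [[x y] t] /=; rewrite dotNr !subrr /hone; congr (_, _, _); ring. Qed.

Lemma hinvK : involutive (@hinv K n).
Proof. by move=> [[x y] t] /=; rewrite dotNl dotNr !opprK; congr (_, _, _); ring. Qed.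

Lemma hinvM : {morph @hinv K n : g h / hmul g h >-> hmul h g}.
Proof.
move=> [[x y] t] [[x' y'] t'] /=.
rewrite dotNl dotNr opprK dotDl !dotDr.
by congr (_, _, _); [rewrite opprD addrC | rewrite opprD addrC | ring].
Qed.

End HeisenbergGroup.

Lemma is_ultrametric_of_max (R : realType) (T : Type) (d : T -> T -> R) :
  (forall x y, 0 <= d x y) -> (forall x y, d x y = 0 <-> x = y) ->
  (forall x y, d x y = d y x) ->
  (forall x y z, d x z <= Num.max (d x y) (d y z)) -> is_ultrametric d.
Proof.
move=> d_ge0 d_eq0 dC d_max; split=> // x y z; apply: le_trans (d_max x y z) _.
by rewrite ge_max lerDl d_ge0 lerDr d_ge0.
Qed.

Section NormedGroupMetric.
Variables (R : realType) (T : Type) (mul : T -> T -> T) (inv : T -> T) (one : T).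
Hypotheses (mulA : associative mul) (mul1g : left_id one mul)
  (mulg1 : right_id one mul) (mulVg : left_inverse one inv mul)
  (mulgV : right_inverse one inv mul) (invK : involutive inv)
  (invM : {morph inv : g h / mul g h >-> mul h g}).
Variable N : T -> R.
Hypotheses (N_ge0 : forall g, 0 <= N g) (N_eq0 : forall g, N g = 0 <-> g = one)
  (N_inv : forall g, N (inv g) = N g)
  (N_mul : forall g h, N (mul g h) <= Num.max (N g) (N h)).

Lemma ldist_ultrametric : is_ultrametric (fun g h => N (mul (inv h) g)).
Proof.
apply: is_ultrametric_of_max => [g h|g h|g h|g h k] //.
- rewrite N_eq0; split=> [gh1|->]; last exact: mulVg.
  by rewrite -[g]mul1g -(mulgV h) -mulA gh1 mulg1.
- by rewrite -N_inv invM invK.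
- have -> : mul (inv k) g = mul (mul (inv k) h) (mul (inv h) g).
    by rewrite -mulA (mulA h) mulgV mul1g.
  by rewrite maxC N_mul.
Qed.

Lemma rdist_ultrametric : is_ultrametric (fun g h => N (mul g (inv h))).
Proof.
apply: is_ultrametric_of_max => [g h|g h|g h|g h k] //.
- rewrite N_eq0; split=> [gh1|->]; last exact: mulgV.
  by rewrite -[g]mulg1 -(mulVg h) mulA gh1 mul1g.
- by rewrite -N_inv invM invK.
- have -> : mul g (inv k) = mul (mul g (inv h)) (mul h (inv k)).
    by rewrite -mulA (mulA (inv h)) mulVg mul1g.
  exact: N_mul.
Qed.

Lemma ldist_invariant a g h : N (mul (inv (mul a h)) (mul a g)) = N (mul (inv h) g).
Proof. by rewrite invM -mulA (mulA (inv a)) mulVg mul1g. Qed.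

Lemma rdist_invariant b g h : N (mul (mul g b) (inv (mul h b))) = N (mul g (inv h)).
Proof. by rewrite invM -mulA (mulA b) mulgV mul1g. Qed.

End NormedGroupMetric.

Lemma sqrtr_le_sqr (R : rcfType) (a b : R) : 0 <= b -> (Num.sqrt a <= b) = (a <= b ^+ 2).
Proof. by move=> b0; rewrite -[RHS]ler_sqrt ?exprn_ge0 // sqrtr_sqr ger0_norm. Qed.

Lemma sqrtr_lt_sqr (R : rcfType) (a b : R) : 0 < b -> (Num.sqrt a < b) = (a < b ^+ 2).
Proof. by move=> b0; rewrite -[RHS]ltr_sqrt ?exprn_gt0 // sqrtr_sqr gtr0_norm. Qed.

Section UltrametricAbs.
Variables (R : realType) (K : fieldType) (abs : K -> R).
Hypotheses (abs_ge0 : forall x, 0 <= abs x) (abs_eq0 : forall x, abs x = 0 <-> x = 0)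
  (absM : forall x y, abs (x * y) = abs x * abs y)
  (absD : forall x y, abs (x + y) <= Num.max (abs x) (abs y)).

Lemma abs0 : abs 0 = 0. Proof. exact/abs_eq0. Qed.

Lemma abs1 : abs 1 = 1.
Proof.
have abs1_neq0 : abs 1 != 0 by apply/eqP => /abs_eq0/eqP; rewrite oner_eq0.
by apply: (mulIf abs1_neq0); rewrite -absM !mul1r.
Qed.

Lemma absN x : abs (- x) = abs x.
Proof.
have absN1 : abs (-1) = 1.
  apply: (pexpIrn (n := 2)); rewrite ?nnegrE //.
  by rewrite expr1n expr2 -absM mulrNN mulr1 abs1.
by rewrite -mulN1r absM absN1 mul1r.
Qed.

Lemma absBC x y : abs (x - y) = abs (y - x).
Proof. by rewrite -absN opprB. Qed.

Lemma absD_le x y b : abs x <= b -> abs y <= b -> abs (x + y) <= b.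
Proof. by move=> hx hy; apply: le_trans (absD x y) _; rewrite ge_max hx hy. Qed.

Lemma absD_lt x y b : abs x < b -> abs y < b -> abs (x + y) < b.
Proof. by move=> hx hy; apply: le_lt_trans (absD x y) _; rewrite gt_max hx hy. Qed.

Lemma abs_sum_le (I : Type) (r : seq I) (F : I -> K) b :
  0 <= b -> (forall i, abs (F i) <= b) -> abs (\sum_(i <- r) F i) <= b.
Proof.
by move=> b0 Fb; elim/big_ind: _ => //; [rewrite abs0 | move=> u v; exact: absD_le].
Qed.

Lemma abs_sum_lt (I : Type) (r : seq I) (F : I -> K) b :
  0 < b -> (forall i, abs (F i) < b) -> abs (\sum_(i <- r) F i) < b.
Proof.
by move=> b0 Fb; elim/big_ind: _ => //; [rewrite abs0 | move=> u v; exact: absD_lt].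
Qed.

Lemma abs_le_near u v M : abs (u - v) <= 1 -> abs v <= M -> abs u <= Num.max M 1.
Proof.
move=> uv vM; rewrite -(subrK v u); apply: absD_le.
  by rewrite le_max uv orbT.
by rewrite le_max vM.
Qed.

Variable n : nat.
Local Notation N := (@hnorm R K abs n).
Implicit Types g h : heis K n.

Lemma hnorm_leP g b : 0 <= b ->
  N g <= b <->
  (forall j, abs (g.1.1 0 j) <= b /\ abs (g.1.2 0 j) <= b) /\ abs g.2 <= b ^+ 2.
Proof.
case: g => [[x y] t] b0 /=.
rewrite ge_max sqrtr_le_sqr //; split=> [/andP[/bigmax_leP[_ xyb] tb] | [xyb tb]].
  by split=> // j; move: (xyb j isT); rewrite ge_max => /andP.
rewrite tb andbT; apply/bigmax_leP; split=> // j _.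
by rewrite ge_max; have [-> ->] := xyb j.
Qed.

Lemma hnorm_ltP g b : 0 < b ->
  N g < b <->
  (forall j, abs (g.1.1 0 j) < b /\ abs (g.1.2 0 j) < b) /\ abs g.2 < b ^+ 2.
Proof.
case: g => [[x y] t] b0 /=.
rewrite gt_max sqrtr_lt_sqr //; split=> [/andP[/bigmax_ltP[_ xyb] tb] | [xyb tb]].
  by split=> // j; move: (xyb j isT); rewrite gt_max => /andP.
rewrite tb andbT; apply/bigmax_ltP; split=> // j _.
by rewrite gt_max; have [-> ->] := xyb j.
Qed.

Lemma hnorm_ge0 g : 0 <= N g.
Proof. by case: g => [[x y] t]; rewrite /= le_max sqrtr_ge0 orbT. Qed.

Lemma hnorm_coord g :
  (forall j, abs (g.1.1 0 j) <= N g /\ abs (g.1.2 0 j) <= N g) /\ abs g.2 <= N g ^+ 2.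
Proof. exact: (@hnorm_leP g _ (hnorm_ge0 g)).1 (lexx _). Qed.

Lemma hnorm_eq0 g : N g = 0 <-> g = hone.
Proof.
split=> [g0 | ->]; last first.
  apply/eqP; rewrite eq_le hnorm_ge0 andbT; apply/hnorm_leP => //.
  by split=> [j|]; rewrite ?mxE abs0 ?expr0n.
have abs_le0 u : abs u <= 0 -> u = 0.
  by move=> u0; apply/abs_eq0/eqP; rewrite eq_le u0 abs_ge0.
move: (hnorm_coord g); rewrite g0 expr0n; clear g0.
case: g => [[x y] t] /= [xy0 t0]; rewrite /hone (abs_le0 _ t0).
by congr (_, _, _); apply/rowP => j; rewrite !mxE; apply: abs_le0; have [? ?] := xy0 j.
Qed.

Lemma hnorm_mul g h : N (hmul g h) <= Num.max (N g) (N h).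
Proof.
have b0 : 0 <= Num.max (N g) (N h) by rewrite le_max hnorm_ge0.
have /(@hnorm_leP g _ b0) [gxy gt] : N g <= Num.max (N g) (N h) by rewrite le_max lexx.
have /(@hnorm_leP h _ b0) [hxy ht] : N h <= Num.max (N g) (N h).
  by rewrite le_max lexx orbT.
move: (Num.max _ _) b0 gxy gt hxy ht => b b0 gxy gt hxy ht.
apply/(@hnorm_leP _ _ b0).
case: g gxy gt => [[x y] t]; case: h hxy ht => [[x' y'] t'] /= hxy ht gxy gt.
split=> [j|].
  by have [? ?] := gxy j; have [? ?] := hxy j; rewrite !mxE; split; apply: absD_le.
do 2?apply: absD_le => //; apply: abs_sum_le => [|j]; first exact: exprn_ge0.
by have [? _] := gxy j; have [_ ?] := hxy j; rewrite absM expr2 ler_pM.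
Qed.

Lemma hnorm_inv g : N (hinv g) = N g.
Proof.
suff N_inv_le k : N (hinv k) <= N k.
  by apply/eqP; rewrite eq_le N_inv_le -{1}(hinvK g) N_inv_le.
have [kxy kt] := hnorm_coord k.
move: (N k) (hnorm_ge0 k) kxy kt => b b0 kxy kt; apply/(@hnorm_leP _ _ b0).
case: k kxy kt => [[x y] t] /= kxy kt; split=> [j|]; first by rewrite !mxE !absN.
apply: absD_le; first by rewrite absN.
apply: abs_sum_le => [|j]; first exact: exprn_ge0.
by have [? ?] := kxy j; rewrite absM expr2 ler_pM.
Qed.

Lemma hnorm_dil r g : N (hdil r g) = abs r * N g.
Proof.
case: g => [[x y] t] /=; have r0 := abs_ge0 r.
rewrite maxr_pMr // (big_morph _ (fun a b => @maxr_pMr _ (abs r) a b r0) (mulr0 _)).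
congr (Num.max _ _); first by apply: eq_bigr => j _; rewrite !mxE !absM maxr_pMr.
by rewrite !absM sqrtrM ?mulr_ge0 // -expr2 sqrtr_sqr ger0_norm.
Qed.


Lemma abs_dot_lt (I : Type) (r : seq I) (a b : I -> K) C eta : 0 < C -> 0 < eta ->
  (forall i, abs (a i) <= C /\ abs (b i) < eta) ->
  abs (\sum_(i <- r) a i * b i) < C * eta.
Proof.
move=> C0 eta0 ab; apply: abs_sum_lt => [|i]; first exact: mulr_gt0.
have [aC beta] := ab i; rewrite absM.
by apply: le_lt_trans (ler_wpM2r (abs_ge0 _) aC) _; rewrite ltr_pM2l.
Qed.

Definition xy_close (de : R) g h :=
  forall j, abs (h.1.1 0 j - g.1.1 0 j) < de /\ abs (h.1.2 0 j - g.1.2 0 j) < de.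

Definition coord_close (de : R) g h := xy_close de g h /\ abs (h.2 - g.2) < de.

Definition boxes_comparable g (f : heis K n -> R) :=
  (forall e, 0 < e -> exists2 de, 0 < de & forall h, coord_close de g h -> f h < e) /\
  (forall de, 0 < de -> exists2 e, 0 < e & forall h, f h < e -> coord_close de g h).

Lemma ball_open (c : K) (de : R) : abs_open abs (fun a => abs (a - c) < de).
Proof.
move=> a ac; exists de; split; first exact: le_lt_trans (abs_ge0 _) ac.
by move=> u ua; rewrite -(subrK a u) -addrA; apply: absD_lt.
Qed.

Lemma product_open_of_metric_open (d : heis K n -> heis K n -> R) U :
  (forall g e, 0 < e -> exists2 de, 0 < de & forall h, coord_close de g h -> d g h < e) ->
  metric_open d U -> product_open abs U.
Proof.
move=> box_in_ball dU g Ug; have [e [e0 ball_U]] := dU g Ug.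
have [de de0 box_ball] := box_in_ball g e e0.
exists (fun j a => abs (a - g.1.1 0 j) < de), (fun j a => abs (a - g.1.2 0 j) < de),
  (fun a => abs (a - g.2) < de); split=> [j|j||//|h xy t].
- exact: ball_open.
- exact: ball_open.
- exact: ball_open.
- by split=> [j|]; rewrite !subrr abs0.
- exact/ball_U/box_ball.
Qed.

Lemma metric_open_of_product_open (d : heis K n -> heis K n -> R) U :
  (forall g de, 0 < de -> exists2 e, 0 < e & forall h, d g h < e -> coord_close de g h) ->
  product_open abs U -> metric_open d U.
Proof.
move=> ball_in_box pU g Ug.
have [Vx [Vy [Vt [Vx_open Vy_open Vt_open [g_xy g_t] box_U]]]] := pU g Ug.
have [et [et0 Vt_ball]] := Vt_open _ g_t.
have /fin_all_exists [ex ex_ball] j :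
    exists e, 0 < e /\ forall a, abs (a - g.1.1 0 j) < e -> Vx j a.
  by apply: Vx_open; case: (g_xy j).
have /fin_all_exists [ey ey_ball] j :
    exists e, 0 < e /\ forall a, abs (a - g.1.2 0 j) < e -> Vy j a.
  by apply: Vy_open; case: (g_xy j).
pose de := Num.min et (\big[Num.min/1]_j Num.min (ex j) (ey j)).
have de0 : 0 < de.
  rewrite lt_min et0; apply/bigmin_gtP; split=> [|j _]; first exact: ltr01.
  by rewrite lt_min (ex_ball j).1 (ey_ball j).1.
have de_le j : de <= ex j /\ de <= ey j.
  have : de <= Num.min (ex j) (ey j) by rewrite ge_min bigmin_le orbT.
  by rewrite le_min => /andP.
have [e e0 ball_box] := ball_in_box g de de0.
exists e; split=> // h /ball_box [xy t]; apply: box_U => [j|].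
  have [x_lt y_lt] := xy j; have [ex_de ey_de] := de_le j.
  split; first exact/(ex_ball j).2/(lt_le_trans x_lt).
  exact/(ey_ball j).2/(lt_le_trans y_lt).
by apply: Vt_ball; apply: lt_le_trans t _; rewrite ge_min lexx.
Qed.

Lemma induces_product_topology_boxes (d : heis K n -> heis K n -> R) :
  (forall g, boxes_comparable g (d g)) -> induces_product_topology abs d.
Proof.
move=> dbox U; split.
  by apply: product_open_of_metric_open => g; case: (dbox g).
by apply: metric_open_of_product_open => g; case: (dbox g).
Qed.

(* F h plays the role of h^-1 g or g h^-1: its t-coordinate is g.2 - h.2 up to a
   bilinear twist, one of whose factors stays bounded by C near g while the other
   is small. *)
Section TwistedDifference.
Variables (g : heis K n) (F : heis K n -> heis K n) (a b : heis K n -> 'I_n -> K) (C : R).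
Hypotheses (C1 : 1 <= C)
  (F_xy : forall h j, abs ((F h).1.1 0 j) = abs (h.1.1 0 j - g.1.1 0 j) /\
                     abs ((F h).1.2 0 j) = abs (h.1.2 0 j - g.1.2 0 j))
  (F_t : forall h, (F h).2 = g.2 - h.2 + \sum_(j < n) a h j * b h j)
  (ab_near : forall h eta, eta <= 1 -> xy_close eta g h ->
     forall j, abs (a h j) <= C /\ abs (b h j) < eta).

Let C0 : 0 < C. Proof. exact: lt_le_trans ltr01 C1. Qed.

Lemma twisted_lt_of_close e : 0 < e ->
  exists2 de, 0 < de & forall h, coord_close de g h -> N (F h) < e.
Proof.
move=> e0; have k0 : 0 < e ^+ 2 / C by rewrite divr_gt0 ?exprn_gt0.
have Ck : C * (e ^+ 2 / C) = e ^+ 2 by rewrite mulrC divfK ?gt_eqF.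
move: (e ^+ 2 / C) k0 Ck => k k0 Ck.
have de0 : 0 < Num.min (Num.min 1 e) k by rewrite !lt_min ltr01 e0.
exists (Num.min (Num.min 1 e) k) => // h [xy t].
set de := Num.min _ _ in de0 xy t.
have de1 : de <= 1 by rewrite !ge_min lexx.
have de_e : de <= e by rewrite !ge_min lexx orbT.
have de_k : de <= k by rewrite ge_min lexx orbT.
have Cde : C * de <= e ^+ 2 by rewrite -Ck ler_wpM2l // ltW.
have k_e2 : k <= e ^+ 2 by rewrite -Ck ler_peMl // ltW.
apply/(@hnorm_ltP _ _ e0); split=> [j|].
  rewrite (F_xy h j).1 (F_xy h j).2.
  by have [x_lt y_lt] := xy j; split; apply: lt_le_trans de_e.
rewrite F_t; apply: absD_lt.
  by rewrite absBC; apply: lt_le_trans t (le_trans de_k k_e2).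
exact: lt_le_trans (abs_dot_lt _ C0 de0 (ab_near de1 xy)) Cde.
Qed.

Lemma close_of_twisted_lt de : 0 < de ->
  exists2 e, 0 < e & forall h, N (F h) < e -> coord_close de g h.
Proof.
move=> de0; have k0 : 0 < de / C by rewrite divr_gt0.
have Ck : C * (de / C) = de by rewrite mulrC divfK ?gt_eqF.
move: (de / C) k0 Ck => k k0 Ck.
have e0 : 0 < Num.min 1 k by rewrite lt_min ltr01 k0.
exists (Num.min 1 k) => // h; set e := Num.min 1 k in e0 *.
have e1 : e <= 1 by rewrite ge_min lexx.
have Ce : C * e <= de by rewrite -Ck ler_wpM2l ?ge_min ?lexx ?orbT // ltW.
have e_de : e <= de by apply: le_trans Ce; rewrite ler_peMl // ltW.
have e2_de : e ^+ 2 <= de by rewrite expr2 (le_trans _ e_de) // ler_piMl // ltW.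
move=> /(@hnorm_ltP _ _ e0) [Fxy Ft].
have xy : xy_close e g h.
  by move=> j; rewrite -(F_xy h j).1 -(F_xy h j).2; exact: Fxy.
split=> [j|].
  by have [x_lt y_lt] := xy j; split; apply: lt_le_trans e_de.
have -> : h.2 - g.2 = \sum_(j < n) a h j * b h j - (F h).2 by rewrite F_t; ring.
apply: absD_lt; last by rewrite absN; apply: lt_le_trans Ft e2_de.
exact: lt_le_trans (abs_dot_lt _ C0 e0 (ab_near e1 xy)) Ce.
Qed.

Lemma boxes_comparable_twisted : boxes_comparable g (fun h => N (F h)).
Proof. by split; [exact: twisted_lt_of_close | exact: close_of_twisted_lt]. Qed.

End TwistedDifference.

Lemma hdistL_ultrametric : is_ultrametric (fun g h => N (hmul (hinv h) g)).
Proof.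
exact: (@ldist_ultrametric _ _ _ _ _ hmulA hmul1g hmulg1 hmulVg hmulgV hinvK hinvM N)
  hnorm_ge0 hnorm_eq0 hnorm_inv hnorm_mul.
Qed.

Lemma hdistR_ultrametric : is_ultrametric (fun g h => N (hmul g (hinv h))).
Proof.
exact: (@rdist_ultrametric _ _ _ _ _ hmulA hmul1g hmulg1 hmulVg hmulgV hinvK hinvM N)
  hnorm_ge0 hnorm_eq0 hnorm_inv hnorm_mul.
Qed.

Lemma hdistL_left_invariant : left_invariant (fun g h => N (hmul (hinv h) g)).
Proof. exact: ldist_invariant hmulA hmul1g hmulVg hinvM N. Qed.

Lemma hdistR_right_invariant : right_invariant (fun g h => N (hmul g (hinv h))).
Proof. exact: rdist_invariant hmulA hmul1g hmulgV hinvM N. Qed.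

Lemma hdistL_product_topology :
  induces_product_topology abs (fun g h => N (hmul (hinv h) g)).
Proof.
apply: induces_product_topology_boxes => g.
apply: (boxes_comparable_twisted (a := fun h j => h.1.1 0 j)
  (b := fun h j => (h.1.2 - g.1.2) 0 j) (C := Num.max (N g) 1)).
- by rewrite le_max lexx orbT.
- move=> [[x' y'] t'] j; case: g => [[x y] t] /=.
  by rewrite !mxE; split; rewrite addrC absBC.
- move=> [[x' y'] t']; case: g => [[x y] t] /=.
  by rewrite dotNl dotDr dotNr; ring.
- move=> h eta eta1 xy j; have [x_lt y_lt] := xy j; split; last by rewrite /= !mxE.
  apply: abs_le_near (ltW (lt_le_trans x_lt eta1)) _.
  exact: ((hnorm_coord g).1 j).1.
Qed.

Lemma hdistR_product_topology :
  induces_product_topology abs (fun g h => N (hmul g (hinv h))).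
Proof.
apply: induces_product_topology_boxes => g.
apply: (boxes_comparable_twisted (a := fun h j => h.1.2 0 j)
  (b := fun h j => (h.1.1 - g.1.1) 0 j) (C := Num.max (N g) 1)).
- by rewrite le_max lexx orbT.
- move=> [[x' y'] t'] j; case: g => [[x y] t] /=.
  by rewrite !mxE; split; rewrite absBC.
- move=> [[x' y'] t']; case: g => [[x y] t] /=.
  by rewrite dotNr dotDr dotNr (dotC y' x') (dotC y' x); ring.
- move=> h eta eta1 xy j; have [x_lt y_lt] := xy j; split; last by rewrite /= !mxE.
  apply: abs_le_near (ltW (lt_le_trans y_lt eta1)) _.
  exact: ((hnorm_coord g).1 j).2.
Qed.

End UltrametricAbs.

Theorem mainTheorem1 (p : nat) (R : realType) (K : fieldType) (abs : K -> R)
    (n : nat) :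
  prime p -> is_Qp p abs -> (0 < n)%N ->
  [/\ (forall g h : heis K n,
         hnorm abs (hmul g h) <= Num.max (hnorm abs g) (hnorm abs h)),
      (forall g : heis K n, hnorm abs (hinv g) = hnorm abs g),
      (forall (r : K) (g : heis K n), hnorm abs (hdil r g) = abs r * hnorm abs g),
      (let dL := fun g h : heis K n => hnorm abs (hmul (hinv h) g) in
       [/\ is_ultrametric dL, left_invariant dL & induces_product_topology abs dL])
    & (let dR := fun g h : heis K n => hnorm abs (hmul g (hinv h)) in
       [/\ is_ultrametric dR, right_invariant dR & induces_product_topology abs dR])].
Proof.
move=> _ [abs_ge0 [abs_eq0 [absM [absD _]]]] _; split.
- by apply: hnorm_mul.
- by apply: hnorm_inv.
- by apply: hnorm_dil.
- by split; [apply: hdistL_ultrametric | apply: hdistL_left_invariant |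
             apply: hdistL_product_topology].
- by split; [apply: hdistR_ultrametric | apply: hdistR_right_invariant |
             apply: hdistR_product_topology].
Qed.
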